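(* Let $Q$ be a real affine space modelled on a real vector space $V$ and let $f,f'\in A(Q)$, $n\in\mathbb N$. Suppose that for every $k\le n$ the multidirectional derivatives $\mathrm d^kf(q;w_1,\dots,w_k)$ and $\mathrm d^kf'(q;w_1,\dots,w_k)$ exist (for all $q\in Q$, $w_i\in V$). Then for all $q\in Q$ and $v_1,\dots,v_n\in V$, $$\mathrm d^n(ff')(q;v_1,\dots,v_n)=\sum_{\substack{(I,I')\\ I\cup I'=N,\ I\cap I'=\emptyset}}\mathrm d^{|I|}f(q;\mathbf v^I)\,\mathrm d^{|I'|}f'(q;\mathbf v^{I'}),$$ the sum running over ordered pairs of disjoint (possibly empty) subsets of $N=\{1,\dots,n\}$ with union $N$.
   Context: $A(Q)$: real functions on $Q$. For $I=\{i_1<\dots<i_m\}$, $\mathbf v^I=(v_{i_1},\dots,v_{i_m})$. The $k$-th polarization: $\delta^0f=f$ and for $k\ge1$, $\delta^kf(q;w_1,\dots,w_k)=(-1)^k\sum_{J\subset\{1,\dots,k\}}(-1)^{|J|}f(q+\sum_{j\in J}w_j)$ (the $J=\emptyset$ term is $f(q)$). The $k$-th multidirectional derivative is $\mathrm d^kf(q;w_1,\dots,w_k)=\lim_{s\to0}s^{-k}\delta^kf(q;sw_1,\dots,sw_k)$ when the limit exists; $\mathrm d^0f(q)=f(q)$. *)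

From HB Require Import structures.
From mathcomp Require Import all_boot all_order all_algebra.
From mathcomp Require Import all_classical all_reals topology normedtype.
Set Implicit Arguments. Unset Strict Implicit. Unset Printing Implicit Defensive.
Import Order.TTheory GRing.Theory Num.Theory.
Import numFieldNormedType.Exports.
Local Open Scope ring_scope.
Local Open Scope classical_set_scope.

(* Q is a real affine space modelled on V, via a free transitive action
   vadd : Q -> V -> Q  (written q + v in the paper). *)
Definition affine_action (R : realType) (V : lmodType R) (Q : Type)
  (vadd : Q -> V -> Q) : Prop :=
  (forall q, vadd q 0 = q) /\
  (forall q u w, vadd (vadd q u) w = vadd q (u + w)) /\
  (forall p q, exists v, vadd p v = q /\ forall v', vadd p v' = q -> v' = v).

Definition polar (R : realType) (V : lmodType R) (Q : Type)
  (vadd : Q -> V -> Q) (k : nat) (f : Q -> R) (q : Q) (w : 'I_k -> V) : R :=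
  if k == 0%N then f q else
  (-1) ^+ k * \sum_(J : {set 'I_k}) (-1) ^+ #|J| * f (vadd q (\sum_(j in J) w j)).
Arguments polar {R V Q} vadd k f q w.

Definition is_mdiff (R : realType) (V : lmodType R) (Q : Type)
  (vadd : Q -> V -> Q) (k : nat) (f : Q -> R) (q : Q) (w : 'I_k -> V) (l : R)
  : Prop :=
  if k == 0%N then l = f q else
  (fun s : R => s ^- k * polar vadd k f q (fun j => s *: w j)) x @[x --> 0^'] --> l.
Arguments is_mdiff {R V Q} vadd k f q w l.

(* the value of d^k f(q; w) (meaningful when it exists) *)
Definition mdiff (R : realType) (V : lmodType R) (Q : Type)
  (vadd : Q -> V -> Q) (k : nat) (f : Q -> R) (q : Q) (w : 'I_k -> V) : R :=
  if k == 0%N then f q else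
  lim ((fun s : R => s ^- k * polar vadd k f q (fun j => s *: w j)) x @[x --> 0^']).
Arguments mdiff {R V Q} vadd k f q w.

(* v^I : the subfamily of v indexed by I, in increasing order of indices *)
Definition vsub (V : Type) (n : nat) (v : 'I_n -> V) (I : {set 'I_n})
  : 'I_#|I| -> V := fun j => v (enum_val j).
Arguments vsub {V n} v I.

From HB Require Import structures.
From mathcomp Require Import all_boot all_order all_algebra.
From mathcomp Require Import all_classical all_reals topology normedtype realfun.
Import Order.TTheory GRing.Theory Num.Theory.
Import numFieldNormedType.Exports.

Set Implicit Arguments.
Unset Strict Implicit.
Unset Printing Implicit Defensive.
Local Open Scope ring_scope.

(* Write g_J := g (q + sum_(j in J) w_j).  The polarization delta^|A| g (q; w^A)
   is the Moebius transform (-1)^|A| sum_(K \subset A) (-1)^|K| g_K, so Moebius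
   inversion g_J = sum_(A \subset J) delta^|A| g (q; w^A), applied to g and g',
   gives the Leibniz rule for polarizations
     delta^n (g g') = sum_(A :|: B = N) delta^|A| g (w^A) * delta^|B| g' (w^B).
   Replacing w by s w and dividing by s^n = s^|A| s^|B| / s^|A :&: B| turns each
   term into s^|A :&: B| times two difference quotients; as s -> 0 the terms
   with A, B not disjoint vanish and the others tend to d^|A| f * d^|B| f'. *)

Section SetPolarization.
Variables (R : comNzRingType) (T : finType).

Definition set_polar (G : {set T} -> R) (A : {set T}) : R :=
  (-1) ^+ #|A| * \sum_(K : {set T} | K \subset A) (-1) ^+ #|K| * G K.

Lemma sum_set_prod (phi : T -> bool -> R) :
  \sum_(A : {set T}) \prod_i phi i (i \in A) = \prod_i (phi i true + phi i false).
Proof.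
under [RHS]eq_bigr do rewrite -big_bool.
rewrite bigA_distr_bigA /= (reindex (fun f : {ffun T -> bool} => [set x | f x])) /=.
  by apply: eq_bigr => f _; apply: eq_bigr => i _; rewrite inE.
exists (fun A : {set T} => [ffun x => x \in A]) => [f _|A _].
  by apply/ffunP => x; rewrite ffunE inE.
by apply/setP => x; rewrite inE ffunE.
Qed.

Lemma sum_sign_subset_between (K J : {set T}) :
  \sum_(A : {set T} | (K \subset A) && (A \subset J)) (-1) ^+ #|A|
  = (K == J)%:R * (-1) ^+ #|K| :> R.
Proof.
pose phi (i : T) (b : bool) : R :=
  if b then (if i \in J then -1 else 0) else (if i \in K then 0 else 1).
have phiE (A : {set T}) :
    (if (K \subset A) && (A \subset J) then (-1) ^+ #|A| else 0)
    = \prod_i phi i (i \in A).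
  case: ifP => [/andP [KA AJ]|].
    rewrite -prodr_const big_mkcond /=; apply: eq_bigr => i _.
    rewrite /phi; case: ifP => iA; first by rewrite (fintype.subsetP AJ i iA).
    by case: ifP => // iK; move: (fintype.subsetP KA i iK); rewrite iA.
  move/negbT; rewrite negb_and => /orP [/subsetPn [i iK iA]|/subsetPn [i iA iJ]].
    by rewrite (bigD1 i) //= /phi (negbTE iA) iK mul0r.
  by rewrite (bigD1 i) //= /phi iA (negbTE iJ) mul0r.
rewrite big_mkcond /=; under eq_bigr do rewrite phiE.
rewrite sum_set_prod /phi; case: eqP => [<-|/eqP KJ].
  rewrite mul1r -prodr_const [RHS]big_mkcond /=; apply: eq_bigr => i _.
  by case: ifP; rewrite ?addr0 ?add0r.
rewrite mul0r; move: KJ; rewrite finset.eqEsubset negb_and.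
case/orP => [/subsetPn [i iK iJ]|/subsetPn [i iJ iK]].
  by rewrite (bigD1 i) //= (negbTE iJ) iK addr0 mul0r.
by rewrite (bigD1 i) //= iJ (negbTE iK) addNr mul0r.
Qed.

Lemma set_polar_inversion (G : {set T} -> R) (J : {set T}) :
  G J = \sum_(A : {set T} | A \subset J) set_polar G A.
Proof.
rewrite /set_polar; under eq_bigr do rewrite big_distrr /=.
rewrite (exchange_big_dep predT) //=.
under eq_bigr => K _.
  under eq_bigl do rewrite andbC.
  rewrite -big_distrl /= sum_sign_subset_between.
  over.
rewrite (bigD1 J) //= eqxx mul1r big1 ?addr0; last by move=> K /negbTE ->; rewrite !mul0r.
by rewrite mulrA -expr2 sqrr_sign mul1r.
Qed.

Lemma set_polar_mul (G H : {set T} -> R) :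
  set_polar (fun J => G J * H J) [set: T]
  = \sum_(p : {set T} * {set T} | p.1 :|: p.2 == [set: T])
      set_polar G p.1 * set_polar H p.2.
Proof.
rewrite {1}/set_polar; under eq_bigl do rewrite finset.subsetT.
under eq_bigr => J _ do rewrite [G J]set_polar_inversion [H J]set_polar_inversion
  big_distrlr /= pair_big_dep /= big_distrr big_mkcond /=.
rewrite exchange_big big_distrr [RHS]big_mkcond /=; apply: eq_bigr => p _.
rewrite -big_mkcond -big_distrl /=.
have -> : \sum_(J : {set T} | (p.1 \subset J) && (p.2 \subset J)) (-1) ^+ #|J|
    = \sum_(J : {set T} | (p.1 :|: p.2 \subset J) && (J \subset [set: T])) (-1) ^+ #|J| :> R.
  by apply: eq_bigl => J; rewrite finset.subsetT andbT finset.subUset.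
rewrite sum_sign_subset_between; case: eqP => [->|_]; last by rewrite !mul0r mulr0.
by rewrite mul1r !mulrA -expr2 sqrr_sign mul1r.
Qed.

Lemma sum_subset_enum_val (F : {set T} -> R) (A : {set T}) :
  \sum_(J : {set T} | J \subset A) F J
  = \sum_(J : {set 'I_#|A|}) F [set enum_val j | j in J].
Proof.
have img_inj : {in [set: {set 'I_#|A|}] &,
    injective (fun J : {set 'I_#|A|} => [set enum_val j | j in J])}.
  by move=> J J' _ _; apply: imset_inj; exact: enum_val_inj.
rewrite (eq_bigl (fun J : {set 'I_#|A|} => J \in [set: {set 'I_#|A|}])); last first.
  by move=> J; rewrite finset.in_setT.
rewrite -(big_imset F img_inj) /=.
apply: eq_bigl => J; apply/idP/imsetP => [JA|[J' _ ->]]; last first.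
  by apply/fintype.subsetP => x /imsetP [j _ ->]; exact: enum_valP.
exists [set j | enum_val j \in J]; first by rewrite inE.
apply/setP => x; apply/idP/imsetP => [xJ|[j]]; last by rewrite inE => jJ ->.
have xA := fintype.subsetP JA x xJ.
by exists (enum_rank_in xA x); rewrite ?inE enum_rankK_in.
Qed.

Lemma sum_cover_exp0_cardI (F : {set T} * {set T} -> R) :
  \sum_(p : {set T} * {set T} | p.1 :|: p.2 == [set: T]) 0 ^+ #|p.1 :&: p.2| * F p
  = \sum_(p : {set T} * {set T} | [disjoint p.1 & p.2] && (p.1 :|: p.2 == [set: T])) F p.
Proof.
rewrite big_mkcond [RHS]big_mkcond; apply: eq_bigr => p _.
rewrite -setI_eq0 -cards_eq0 expr0n.
by case: (_ :|: _ == _); case: (_ == 0)%N; rewrite ?mul1r ?mul0r ?andbF.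
Qed.

End SetPolarization.

Lemma mulr_exprVn_split (F : fieldType) (s X Y : F) (n m a b : nat) :
  s != 0 -> (a + b = n + m)%N ->
  s ^- n * (X * Y) = s ^+ m * ((s ^- a * X) * (s ^- b * Y)).
Proof.
move=> s0 ab_nm; rewrite mulrACA -invfM -exprD ab_nm exprD invfM.
by rewrite [s ^- n / _]mulrC -mulrA mulVKf // expf_neq0.
Qed.

Section Polarization.
Local Open Scope classical_set_scope.
Variables (R : realType) (V : lmodType R) (Q : Type) (vadd : Q -> V -> Q).

Definition polar_quot (k : nat) (g : Q -> R) (q : Q) (w : 'I_k -> V) (s : R) : R :=
  s ^- k * polar vadd k g q (fun j => s *: w j).

Lemma cvg_polar_quot_mdiff k g q (w : 'I_k -> V) :
  (exists l, is_mdiff vadd k g q w l) ->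
  polar_quot g q w x @[x --> 0^'] --> mdiff vadd k g q w.
Proof.
rewrite /is_mdiff /mdiff /polar_quot; case: k w => [|k] w /=; last first.
  by case=> l /[dup] gl /cvg_lim ->.
move=> _; under eq_fun do rewrite expr0 invr1 mul1r.
exact: cvg_cst.
Qed.

Lemma is_mdiff_cvg k g q (w : 'I_k -> V) l :
  polar_quot g q w x @[x --> 0^'] --> l -> is_mdiff vadd k g q w l.
Proof.
rewrite /is_mdiff /polar_quot; case: k w => [|k] w //=.
under eq_fun do rewrite expr0 invr1 mul1r.
by move/cvg_lim => <-//; exact: lim_cst.
Qed.

Hypothesis vadd0 : forall q, vadd q 0 = q.

Lemma polarE k g q (w : 'I_k -> V) :
  polar vadd k g q w
  = (-1) ^+ k * \sum_(J : {set 'I_k}) (-1) ^+ #|J| * g (vadd q (\sum_(j in J) w j)).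
Proof.
rewrite /polar; case: k w => [|k] w //=.
rewrite (big_pred1 finset.set0) => [|J]; last by apply/esym/eqP/setP => -[].
by rewrite big_set0 vadd0 cards0 !mul1r.
Qed.

Lemma polar_vsub n g q (w : 'I_n -> V) (A : {set 'I_n}) :
  polar vadd #|A| g q (vsub w A)
  = set_polar (fun J => g (vadd q (\sum_(j in J) w j))) A.
Proof.
rewrite polarE /set_polar sum_subset_enum_val; congr (_ * _); apply: eq_bigr => J _.
have enum_inj : {in J &, injective enum_val} by move=> i j _ _; exact: enum_val_inj.
by rewrite card_imset ?big_imset //; exact: enum_val_inj.
Qed.

Lemma polar_setT n g q (w : 'I_n -> V) :
  polar vadd n g q w = set_polar (fun J => g (vadd q (\sum_(j in J) w j))) [set: 'I_n].
Proof.
rewrite polarE /set_polar cardsT card_ord.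
by under [in RHS]eq_bigl do rewrite finset.subsetT.
Qed.

Lemma polar_quot_mul n f f' q (v : 'I_n -> V) s : s != 0 ->
  polar_quot (fun x => f x * f' x) q v s
  = \sum_(p : {set 'I_n} * {set 'I_n} | p.1 :|: p.2 == [set: 'I_n]%SET)
      s ^+ #|p.1 :&: p.2| * (polar_quot f q (vsub v p.1) s
                             * polar_quot f' q (vsub v p.2) s).
Proof.
move=> s0; rewrite /polar_quot polar_setT set_polar_mul big_distrr /=.
apply: eq_bigr => p /eqP cover; rewrite -!polar_vsub.
by apply: mulr_exprVn_split; rewrite // -cardsUI cover cardsT card_ord.
Qed.

End Polarization.

Theorem theorem1 (R : realType) (V : lmodType R) (Q : Type)
  (vadd : Q -> V -> Q) (Haff : affine_action vadd)
  (f f' : Q -> R) (n : nat)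
  (Hf : forall k : nat, (k <= n)%N ->
     forall (q : Q) (w : 'I_k -> V), exists l, is_mdiff vadd k f q w l)
  (Hf' : forall k : nat, (k <= n)%N ->
     forall (q : Q) (w : 'I_k -> V), exists l, is_mdiff vadd k f' q w l) :
  forall (q : Q) (v : 'I_n -> V),
    is_mdiff vadd n (fun x => f x * f' x) q v
      (\sum_(IJ : {set 'I_n} * {set 'I_n} |
               [disjoint IJ.1 & IJ.2] && (IJ.1 :|: IJ.2 == [set: 'I_n]))
         mdiff vadd #|IJ.1| f q (vsub v IJ.1) *
         mdiff vadd #|IJ.2| f' q (vsub v IJ.2)).
Proof.
move=> q v; have [vadd0 _] := Haff.
have card_le_n (A : {set 'I_n}) : (#|A| <= n)%N.
  by rewrite -[X in (_ <= X)%N]card_ord max_card.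
have term_cvg (p : {set 'I_n} * {set 'I_n}) :
  ((fun s => s ^+ #|p.1 :&: p.2| * (polar_quot vadd f q (vsub v p.1) s
                                    * polar_quot vadd f' q (vsub v p.2) s))
    x @[x --> 0^'] --> 0 ^+ #|p.1 :&: p.2| * (mdiff vadd #|p.1| f q (vsub v p.1)
                                              * mdiff vadd #|p.2| f' q (vsub v p.2)))%classic.
  apply: cvgM; last apply: cvgM; last 2 first.
  - exact/cvg_polar_quot_mdiff/Hf/card_le_n.
  - exact/cvg_polar_quot_mdiff/Hf'/card_le_n.
  - by apply: cvg_within_filter; exact: exprn_continuous.
apply: is_mdiff_cvg; rewrite -sum_cover_exp0_cardI.
apply: cvg_trans (cvg_big add_continuous _ (fun p _ => term_cvg p)).
apply: near_eq_cvg; near=> s; apply/esym/polar_quot_mul => //.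
near: s; exact: nbhs_dnbhs_neq.
Unshelve. all: by end_near.
Qed.
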